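(* Let $T\in\mathbb{C}^{l\times l}$ and let $\lambda_1,\lambda_2,\lambda_3$ be three distinct eigenvalues of $T$. Then for all $\gamma=(\gamma_{12},\gamma_{13},\gamma_{23})\in\mathbb{C}^3$, \[ \operatorname{rank}\begin{bmatrix} T-\lambda_1 I_l & \gamma_{12} I_l & \gamma_{13} I_l\\ 0 & T-\lambda_2 I_l & \gamma_{23} I_l\\ 0&0&T-\lambda_3 I_l\end{bmatrix}\le 3l-3 , \] equivalently $s_{3l-2}$ of this matrix equals $0$.
   Context: $s_j(\cdot)$ denotes the $j$-th largest singular value of a matrix ($s_1\ge s_2\ge\cdots$). *)

From HB Require Import structures.
From mathcomp Require Import all_boot all_order all_algebra.
From mathcomp.real_closed Require Import complex.
From mathcomp Require Import reals.
Set Implicit Arguments. Unset Strict Implicit. Unset Printing Implicit Defensive.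
Import Order.TTheory GRing.Theory Num.Theory.
Local Open Scope ring_scope.

Definition blockT {F : fieldType} (l : nat) (T : 'M[F]_l) (l1 l2 l3 g12 g13 g23 : F)
  : 'M[F]_(l + (l + l)) :=
  block_mx (T - l1%:M) (row_mx (g12%:M) (g13%:M))
           0 (block_mx (T - l2%:M) (g23%:M) 0 (T - l3%:M)).

From HB Require Import structures.
From mathcomp Require Import all_boot all_order all_algebra.
From mathcomp.real_closed Require Import complex.
From mathcomp Require Import reals.
From mathcomp Require Import zify ring.
Set Implicit Arguments. Unset Strict Implicit. Unset Printing Implicit Defensive.
Import Order.TTheory GRing.Theory Num.Theory.
Local Open Scope ring_scope.

(* Let v1, v2, v3 be left eigenvectors of T for the three eigenvalues. The
   rows (0, 0, v3), (0, v2, c v2) and (v1, a v1, b v1) lie in the left kernel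
   of the block matrix for suitable scalars a, b, c (the differences of the
   eigenvalues are invertible), and their staggered supports make them
   linearly independent, so rank-nullity gives rank <= 3l - 3. *)

Lemma mxrank_le_sub_row_free_ker (F : fieldType) (k m n : nat)
    (K : 'M[F]_(k, m)) (A : 'M[F]_(m, n)) :
  row_free K -> K *m A = 0 -> (\rank A <= m - k)%N.
Proof.
move=> /eqP rankK /sub_kermxP/mxrankS; rewrite mxrank_ker rankK.
by have := rank_leq_row A; lia.
Qed.

Lemma row_free_col_mx_row_mx0 (F : fieldType) (p n1 n2 : nat)
    (B : 'M[F]_(p, n2)) (u : 'rV[F]_n1) (w : 'rV[F]_n2) :
  row_free B -> u != 0 ->
  row_free (col_mx (row_mx (0 : 'M_(p, n1)) B) (row_mx u w)).
Proof.
move=> freeB nz_u; apply: inj_row_free => x.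
rewrite -[x]hsubmxK mul_row_col mul_mx_row mulmx0 [rsubmx x]mx11_scalar.
rewrite !mul_scalar_mx scale_row_mx add_row_mx add0r -row_mx0 => /eq_row_mx[/eqP].
rewrite scaler_eq0 (negbTE nz_u) orbF => /eqP x2_0.
rewrite x2_0 scale0r addr0 => x1B0.
have x1_0 : lsubmx x = 0 by apply: (row_free_inj freeB); rewrite mul0mx.
by rewrite x1_0 raddf0 row_mx0.
Qed.

Lemma eigenvector_mulmxBscalar (F : fieldType) (l : nat) (T : 'M[F]_l)
    (v : 'rV[F]_l) (x y : F) :
  v *m T = x *: v -> v *m (T - y%:M) = (x - y) *: v.
Proof. by move=> eTv; rewrite mulmxBr eTv mul_mx_scalar scalerBl. Qed.

Lemma mul_row3_blockT (F : fieldType) (l : nat) (T : 'M[F]_l)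
    (l1 l2 l3 g12 g13 g23 : F) (x y z : 'rV[F]_l) :
  row_mx x (row_mx y z) *m blockT T l1 l2 l3 g12 g13 g23 =
  row_mx (x *m (T - l1%:M))
    (row_mx (g12 *: x + y *m (T - l2%:M))
            (g13 *: x + (g23 *: y + z *m (T - l3%:M)))).
Proof.
rewrite /blockT mul_row_block mul_row_block !mulmx0 !addr0 mul_mx_row.
by rewrite add_row_mx !mul_mx_scalar.
Qed.

Section LeftKernelOfBlockT.

Variables (F : fieldType) (l : nat) (T : 'M[F]_l) (l1 l2 l3 g12 g13 g23 : F).
Variables v1 v2 v3 : 'rV[F]_l.
Hypotheses (e1 : v1 *m T = l1 *: v1) (e2 : v2 *m T = l2 *: v2)
           (e3 : v3 *m T = l3 *: v3).
Hypotheses (d12 : l1 != l2) (d13 : l1 != l3) (d23 : l2 != l3).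

(* Solutions of the off-diagonal equations g23 + c (l2 - l3) = 0,
   g12 + a (l1 - l2) = 0 and g13 + a g23 + b (l1 - l3) = 0. *)
Let c := - g23 / (l2 - l3).
Let a := - g12 / (l1 - l2).
Let b := - (g13 + a * g23) / (l1 - l3).

Let M := blockT T l1 l2 l3 g12 g13 g23.

Lemma blockT_left_ker3 : row_mx 0 (row_mx 0 v3) *m M = 0.
Proof.
rewrite mul_row3_blockT (eigenvector_mulmxBscalar _ e3) mul0mx !scaler0 !add0r.
by rewrite subrr scale0r mul0mx !row_mx0.
Qed.

Lemma blockT_left_ker2 : row_mx 0 (row_mx v2 (c *: v2)) *m M = 0.
Proof.
rewrite mul_row3_blockT -scalemxAl !(eigenvector_mulmxBscalar _ e2).
rewrite mul0mx !scaler0 !add0r subrr scale0r scalerA -scalerDl.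
have -> : g23 + c * (l2 - l3) = 0 by rewrite /c; field; rewrite subr_eq0.
by rewrite scale0r !row_mx0.
Qed.

Lemma blockT_left_ker1 : row_mx v1 (row_mx (a *: v1) (b *: v1)) *m M = 0.
Proof.
rewrite mul_row3_blockT -!scalemxAl !(eigenvector_mulmxBscalar _ e1).
rewrite subrr scale0r !scalerA -!scalerDl.
have -> : g12 + a * (l1 - l2) = 0 by rewrite /a; field; rewrite subr_eq0.
have -> : g13 + (g23 * a + b * (l1 - l3)) = 0.
  by rewrite /b; field; rewrite subr_eq0.
by rewrite !scale0r !row_mx0.
Qed.

Lemma rank_blockT_le_eigenvectors :
  v1 != 0 -> v2 != 0 -> v3 != 0 -> (\rank M <= 3 * l - 3)%N.
Proof.
move=> nz1 nz2 nz3.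
pose K23 := col_mx (row_mx (0 : 'rV_l) v3) (row_mx v2 (c *: v2)).
pose K := col_mx (row_mx (0 : 'M_(1 + 1, l)) K23)
                 (row_mx v1 (row_mx (a *: v1) (b *: v1))).
have freeK : row_free K.
  rewrite /K /K23; do 2 apply: row_free_col_mx_row_mx0 => //.
  by rewrite /row_free rank_rV nz3.
have KM0 : K *m M = 0.
  rewrite mul_col_mx blockT_left_ker1 /K23 -[0 : 'M_(1 + 1, l)]col_mx0.
  rewrite -block_mxEh block_mxEv mul_col_mx.
  by rewrite blockT_left_ker2 blockT_left_ker3 !col_mx0.
by have := mxrank_le_sub_row_free_ker freeK KM0; lia.
Qed.

End LeftKernelOfBlockT.

Lemma rank_blockT_le (F : fieldType) (l : nat) (T : 'M[F]_l)
    (l1 l2 l3 g12 g13 g23 : F) :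
  eigenvalue T l1 -> eigenvalue T l2 -> eigenvalue T l3 ->
  l1 != l2 -> l1 != l3 -> l2 != l3 ->
  (\rank (blockT T l1 l2 l3 g12 g13 g23) <= 3 * l - 3)%N.
Proof.
move=> /eigenvalueP[v1 e1 nz1] /eigenvalueP[v2 e2 nz2] /eigenvalueP[v3 e3 nz3].
move=> d12 d13 d23.
exact: (rank_blockT_le_eigenvectors g12 g13 g23 e1 e2 e3 d12 d13 d23 nz1 nz2 nz3).
Qed.

Local Open Scope complex_scope.

Theorem mainTheorem1 (R : realType) (l : nat) (T : 'M[R[i]]_l)
    (lam1 lam2 lam3 : R[i])
    (h1 : eigenvalue T lam1) (h2 : eigenvalue T lam2) (h3 : eigenvalue T lam3)
    (d12 : lam1 != lam2) (d13 : lam1 != lam3) (d23 : lam2 != lam3)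
    (g12 g13 g23 : R[i]) :
  (\rank (blockT T lam1 lam2 lam3 g12 g13 g23) <= 3 * l - 3)%N.
Proof.
exact: (@rank_blockT_le R[i] l T lam1 lam2 lam3 g12 g13 g23 h1 h2 h3 d12 d13 d23).
Qed.
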